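(* Let $(X,\tau,\mathcal{I})$ be an ideal topological space such that $(X,\tau)$ is semi-Alexandroff, $(X,\tau,\mathcal{I})$ is a $T_{\mathcal{I}}$-space, and $\mathcal{I}$ is a $\tau$-boundary. Then $\mathcal{I}$ is completely codense.
   Context: An ideal on a topological space $(X,\tau)$ is a nonempty collection $\mathcal{I}$ of subsets of $X$ closed under taking subsets and finite unions; $(X,\tau,\mathcal{I})$ is then called an ideal topological space. $(X,\tau,\mathcal{I})$ is a $T_{\mathcal{I}}$-space if for every $I\in\mathcal{I}$ and every $x\in X\setminus I$ there is a set $A_x\subseteq X$ with $x\in A_x$, $A_x\cap I=\emptyset$, and $A_x$ either open or closed. A set is semi-open if it lies between an open set and the closure of that open set. $(X,\tau)$ is semi-Alexandroff if every intersection of open sets is semi-open. $\mathcal{I}$ is a $\tau$-boundary if $\tau\cap\mathcal{I}=\{\emptyset\}$. A set $A$ is preopen if $A\subseteq \mathrm{Int}\,\overline{A}$; $\mathcal{I}$ is completely codense if the only preopen set belonging to $\mathcal{I}$ is $\emptyset$ (equivalently, every member of $\mathcal{I}$ is nowhere dense). *)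

From HB Require Import structures.
From mathcomp Require Import all_boot all_order.
From mathcomp Require Import all_classical all_reals all_analysis.
Set Implicit Arguments. Unset Strict Implicit. Unset Printing Implicit Defensive.
Local Open Scope classical_set_scope.

Definition is_ideal (X : Type) (Id : set (set X)) : Prop :=
  (exists A, Id A) /\
  (forall A B, Id B -> A `<=` B -> Id A) /\
  (forall A B, Id A -> Id B -> Id (A `|` B)).

Definition semi_open (X : topologicalType) (A : set X) : Prop :=
  exists U : set X, open U /\ U `<=` A /\ A `<=` closure U.

Definition semi_Alexandroff (X : topologicalType) : Prop :=
  forall F : set (set X), (forall U, F U -> open U) ->
    semi_open (\bigcap_(U in F) U).

Definition T_I_space (X : topologicalType) (Id : set (set X)) : Prop :=
  forall I, Id I -> forall x : X, ~ I x ->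
    exists A : set X, A x /\ A `&` I = set0 /\ (open A \/ closed A).

Definition tau_boundary (X : topologicalType) (Id : set (set X)) : Prop :=
  forall U : set X, open U -> Id U -> U = set0.

Definition preopen (X : topologicalType) (A : set X) : Prop :=
  A `<=` interior (closure A).

Definition completely_codense (X : topologicalType) (Id : set (set X)) : Prop :=
  forall A : set X, preopen A -> Id A -> A = set0.

From mathcomp Require Import all_boot all_order.
From mathcomp Require Import all_classical all_reals all_analysis.
Set Implicit Arguments. Unset Strict Implicit. Unset Printing Implicit Defensive.
Local Open Scope classical_set_scope.

(* The kernel K of A (the intersection of all open supersets of A) is squeezed
   between A and the closure of A when A is preopen, since interior (closure A)
   is an open superset of A; the T_I axiom then forces K = A, so A is
   semi-open by semi-Alexandroffness.  A semi-open member of a tau-boundary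
   ideal contains an open member of the ideal, which must be empty, so its
   closure and hence the set itself are empty. *)

Section Kernel.
Variable X : topologicalType.

Definition kernel (A : set X) : set X :=
  \bigcap_(U in [set U : set X | open U /\ A `<=` U]) U.

Lemma sub_kernel (A : set X) : A `<=` kernel A.
Proof. by move=> x Ax U [_ AU]; exact: AU. Qed.

Lemma kernel_sub_open (A U : set X) : open U -> A `<=` U -> kernel A `<=` U.
Proof. by move=> oU AU x; apply. Qed.

Lemma preopen_kernel_sub_closure (A : set X) :
  preopen A -> kernel A `<=` closure A.
Proof.
move=> pA x Kx; apply: interior_subset.
exact: kernel_sub_open (@open_interior _ _) pA _ Kx.
Qed.

Lemma T_I_kernel_closure_sub (Id : set (set X)) (A : set X) :
  T_I_space Id -> Id A -> kernel A `&` closure A `<=` A.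
Proof.
move=> TI IA x [Kx clAx]; apply: contrapT => nAx.
have [B [Bx [BA oBcB]]] := TI A IA x nAx.
have AnB : A `<=` ~` B by move=> y Ay By; suff : (B `&` A) y by rewrite BA.
case: oBcB => [oB|cB].
- have [y [Ay By]] := clAx B (open_nbhs_nbhs (conj oB Bx)).
  exact: AnB Ay By.
- exact: (kernel_sub_open (closed_openC cB) AnB Kx) Bx.
Qed.

Lemma preopen_T_I_kernel_eq (Id : set (set X)) (A : set X) :
  T_I_space Id -> Id A -> preopen A -> kernel A = A.
Proof.
move=> TI IA pA; apply/seteqP; split; last exact: sub_kernel.
move=> x Kx; apply: (T_I_kernel_closure_sub TI IA).
by split; last exact: preopen_kernel_sub_closure.
Qed.

Lemma semi_Alexandroff_kernel (A : set X) :
  semi_Alexandroff X -> semi_open (kernel A).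
Proof. by move=> sA; apply: sA => U []. Qed.

Lemma tau_boundary_semi_open_eq0 (Id : set (set X)) (S : set X) :
  is_ideal Id -> tau_boundary Id -> semi_open S -> Id S -> S = set0.
Proof.
move=> [_ [Isub _]] bId [V [oV [VS SclV]]] IS.
have V0 : V = set0 by apply: bId oV (Isub _ _ IS VS).
by rewrite -subset0 -(closure0 X) -V0.
Qed.

End Kernel.

Theorem mainTheorem1 (X : topologicalType) (Id : set (set X)) :
  is_ideal Id -> semi_Alexandroff X -> T_I_space Id -> tau_boundary Id ->
  completely_codense Id.
Proof.
move=> ideal sA TI bId A pA IA.
apply: (tau_boundary_semi_open_eq0 ideal bId _ IA).
have <- := preopen_T_I_kernel_eq TI IA pA.
exact: semi_Alexandroff_kernel sA.
Qed.
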